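(* Let $\varepsilon\in\{1,-1\}$, $\delta\in\{-1,0,1\}$, and fix $(\phi_1,\phi_2,\phi_3)\in I_\delta^3$. For $(r_1,r_2,r_3)\in\mathcal{M}_{\varepsilon,\delta}(\phi_1,\phi_2,\phi_3)$ let $\theta_1,\theta_2,\theta_3$ be the generalized angles of the type $(\varepsilon,\varepsilon,\varepsilon)$ triangle $\Delta v_1v_2v_3$ with edge lengths $l_1,l_2,l_3$ ($\theta_i$ at $v_i$, opposite $l_i$), and set $u_i=-\int_{r_i}^\infty\frac{dt}{\tau_{\varepsilon\delta}(t)}$. Then the Jacobian matrix $\big(\partial\theta_i/\partial u_j\big)_{3\times3}$ of the map $u\mapsto(\theta_1,\theta_2,\theta_3)$ on $u(\mathcal{M}_{\varepsilon,\delta}(\phi_1,\phi_2,\phi_3))$ is symmetric.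
   Context: Generalized hyperbolic triangles (in $\mathbb{H}^2$) are convex regions bounded by three geodesics (forming a Euclidean triangle in the Klein model) truncated by common perpendiculars at vertices outside $\overline{\mathbb{H}^2}$, with horodisks at ideal vertices; a generalized vertex has type $1$ (in $\mathbb{H}^2$), $0$ (ideal) or $-1$ (hyperideal). Generalized angle: interior angle (type 1), twice the horocyclic arc length between the sides (type 0), distance between the two sides (type $-1$). Generalized edge length between generalized vertices $u,v$: with $B_u$ the point, the horodisk, or the half-plane beyond the truncating perpendicular, it is $d(B_u,B_v)$ if these are disjoint and minus the distance between the points where $\partial B_u,\partial B_v$ meet the side otherwise. $I_\delta=\mathbb{R}_{>0}$ for $\delta\in\{0,-1\}$, $(0,\pi]$ for $\delta=1$; $J_\sigma=\mathbb{R}_{>0}$ for $\sigma=\pm1$, $J_0=\mathbb{R}$; $\tau_s(t)=\frac12e^t-\frac12se^{-t}$. For $\{i,j,k\}=\{1,2,3\}$, $l_k$ denotes the generalized length of the third side of a generalized triangle of type $(\varepsilon,\varepsilon,\delta)$ whose two sides at the type-$\delta$ vertex have lengths $r_i,r_j$ and generalized angle $\phi_k$ between them, when it exists (when $\delta=1,\phi_k=\pi$, $l_k=r_i+r_j$). $\mathcal{M}_{\varepsilon,\delta}(\phi_1,\phi_2,\phi_3)$ is the set of $(r_1,r_2,r_3)\in(J_{\varepsilon\delta})^3$ for which $l_1,l_2,l_3$ are defined and are the edge lengths of some generalized triangle of type $(\varepsilon,\varepsilon,\varepsilon)$. *)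

From Stdlib Require Import Reals ZArith.
Open Scope R_scope.

Inductive idx : Set := i1 | i2 | i3.

Definition idx_eqb (a b : idx) : bool :=
  match a, b with
  | i1, i1 | i2, i2 | i3, i3 => true
  | _, _ => false
  end.

(* cyclic successor: for k, the other two indices are (nxt k) and (nxt (nxt k)) *)
Definition nxt (a : idx) : idx := match a with i1 => i2 | i2 => i3 | i3 => i1 end.

Definition upd (r : idx -> R) (j : idx) (t : R) : idx -> R :=
  fun m => if idx_eqb m j then t else r m.

Definition tau (s : Z) (t : R) : R := / 2 * exp t - / 2 * IZR s * exp (- t).

Definition In_I (delta : Z) (phi : R) : Prop :=
  if Z.eqb delta 1 then 0 < phi <= PI else 0 < phi.

Definition In_J (sigma : Z) (r : R) : Prop :=
  if Z.eqb sigma 0 then True else 0 < r.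

(* Generalized hyperbolic cosine law.  For generalized vertices a, b of types
   e_a, e_b at generalized distance l, the Lorentzian pairing of the
   normalized vectors is  -<v_a,v_b> = tau_{-e_a e_b}(l)
   (cosh for equal nonzero types, sinh for types (1,-1), e^l/2 with an
   ideal vertex).  In a triangle of type (eps,eps,delta) whose two sides at the
   type-delta vertex have lengths ri, rj and generalized angle phi, the value
   tau_{-1}(l) = cosh l of the third side l is: *)
Definition cosh_third (eps delta : Z) (ri rj phi : R) : R :=
  if Z.eqb delta 1 then
    tau (- (eps * delta)) ri * tau (- (eps * delta)) rj
    - cos phi * tau (eps * delta) ri * tau (eps * delta) rj
  else if Z.eqb delta (-1) then
    cosh phi * tau (eps * delta) ri * tau (eps * delta) rj
    - tau (- (eps * delta)) ri * tau (- (eps * delta)) rj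
  else (* delta = 0 : generalized angle = twice the horocyclic arc *)
    let ci := tau 0 ri in let cj := tau 0 rj in
    phi ^ 2 / 2 * ci * cj + IZR eps * (ci ^ 2 + cj ^ 2) / (2 * ci * cj).

Definition arcosh (x : R) : R := ln (x + sqrt (x ^ 2 - 1)).

(* l_k is defined iff the type (eps,eps,delta) triangle exists, i.e. iff the
   computed cosh of the third side exceeds 1 *)
Definition l_defined (eps delta : Z) (phi r : idx -> R) (k : idx) : Prop :=
  1 < cosh_third eps delta (r (nxt k)) (r (nxt (nxt k))) (phi k).

Definition l_len (eps delta : Z) (phi r : idx -> R) (k : idx) : R :=
  arcosh (cosh_third eps delta (r (nxt k)) (r (nxt (nxt k))) (phi k)).

(* (l1,l2,l3) are the edge lengths of a generalized triangle of type
   (eps,eps,eps), eps = +-1: for eps = 1 a compact hyperbolic triangle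
   (positive lengths + strict triangle inequalities); for eps = -1 a
   right-angled hexagon (any positive alternate side lengths). *)
Definition triangle_lengths (eps : Z) (l : idx -> R) : Prop :=
  (forall k, 0 < l k) /\
  (Z.eqb eps 1 = true -> forall k, l k < l (nxt k) + l (nxt (nxt k))).

Definition gen_angle (eps : Z) (l : idx -> R) (i : idx) : R :=
  let a := l i in let b := l (nxt i) in let c := l (nxt (nxt i)) in
  if Z.eqb eps 1 then acos ((cosh b * cosh c - cosh a) / (sinh b * sinh c))
  else arcosh ((cosh b * cosh c + cosh a) / (sinh b * sinh c)).

Definition in_M (eps delta : Z) (phi r : idx -> R) : Prop :=
  (forall k, In_J (eps * delta) (r k)) /\
  (forall k, l_defined eps delta phi r k) /\
  triangle_lengths eps (l_len eps delta phi r).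

Definition theta (eps delta : Z) (phi r : idx -> R) (i : idx) : R :=
  gen_angle eps (l_len eps delta phi r) i.

Definition improper_integral (f : R -> R) (a I : R) : Prop :=
  (forall b, a <= b -> inhabited (Riemann_integrable f a b)) /\
  (forall e, 0 < e -> exists B, forall b (pr : Riemann_integrable f a b),
      a <= b -> B <= b -> Rabs (RiemannInt pr - I) < e).

(* D is the partial derivative d theta_i / d u_j at the point u(r) of the map
   u |-> theta on u(M), where u_m = U (r_m) coordinatewise. *)
Definition partial_theta_u (eps delta : Z) (phi : idx -> R) (U : R -> R)
    (r : idx -> R) (i j : idx) (D : R) : Prop :=
  forall e, 0 < e -> exists d, 0 < d /\
    forall t, in_M eps delta phi (upd r j t) ->
      0 < Rabs (U t - U (r j)) < d ->
      Rabs ((theta eps delta phi (upd r j t) i - theta eps delta phi r i)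
            / (U t - U (r j)) - D) < e.

From Stdlib Require Import Reals ZArith Lra FunctionalExtensionality.
From Coquelicot Require Import Coquelicot.
Open Scope R_scope.

(* Put C_m = cosh l_m and s = eps * delta.  Because tau_s' = tau_{-s} and
   tau_{-s}^2 - tau_s^2 = s, the cosine law defining C_m gives
     dC_m/dr_j = (tau_{-s}(r_j) C_m - eps tau_{-s}(r_k)) / tau_s(r_j)
   for m <> j, where k is the third index.  The angle theta_i is acos (eps = 1) or
   arcosh (eps = -1) of (C_j C_k - eps C_i) / sqrt ((C_j^2 - 1) (C_k^2 - 1)), and its
   gradient involves Delta = eps (1 - C_1^2 - C_2^2 - C_3^2) + 2 C_1 C_2 C_3 > 0.
   As du_j/dr_j = 1/tau_s(r_j), dtheta_i/du_j = tau_s(r_j) dtheta_i/dr_j; with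
   y_m = tau_{-s}(r_m) this is
     (eps C_k (y_i C_i + y_j C_j) - y_i C_j - y_j C_i + eps y_k (1 - C_k^2))
     / ((C_k^2 - 1) sqrt Delta),
   which is symmetric in i and j. *)

Lemma derivable_pt_lim_eq_value f x l l' :
  derivable_pt_lim f x l -> l = l' -> derivable_pt_lim f x l'.
Proof. intros H <-. exact H. Qed.

Lemma derivable_pt_lim_mult_fun f g x df dg :
  derivable_pt_lim f x df -> derivable_pt_lim g x dg ->
  derivable_pt_lim (fun t => f t * g t) x (df * g x + f x * dg).
Proof. exact (derivable_pt_lim_mult f g x df dg). Qed.

Lemma derivable_pt_lim_minus_fun f g x df dg :
  derivable_pt_lim f x df -> derivable_pt_lim g x dg ->
  derivable_pt_lim (fun t => f t - g t) x (df - dg).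
Proof. exact (derivable_pt_lim_minus f g x df dg). Qed.

Lemma derivable_pt_lim_div_fun f g x df dg : derivable_pt_lim f x df ->
  derivable_pt_lim g x dg -> g x <> 0 ->
  derivable_pt_lim (fun t => f t / g t) x ((df * g x - dg * f x) / (g x)²).
Proof. exact (derivable_pt_lim_div f g x df dg). Qed.

Lemma derivable_pt_lim_comp_fun h f x df dh : derivable_pt_lim f x df ->
  derivable_pt_lim h (f x) dh -> derivable_pt_lim (fun t => h (f t)) x (dh * df).
Proof. exact (derivable_pt_lim_comp f h x df dh). Qed.

Lemma strictly_increasing_inv_continuous (U : R -> R) (P : R -> Prop) x :
  P x -> locally x P -> (forall a b, P a -> a < b -> U a < U b) ->
  forall eta, 0 < eta -> exists d, 0 < d /\
    forall t, P t -> Rabs (U t - U x) < d -> Rabs (t - x) < eta.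
Proof.
  intros Hx [d0 Hd0] Hincr eta Heta.
  set (e := Rmin eta d0 / 2).
  assert (He : 0 < e /\ e < eta /\ e < d0).
  { pose proof (Rmin_l eta d0). pose proof (Rmin_r eta d0).
    pose proof (Rmin_glb_lt eta d0 0 Heta (cond_pos d0)). unfold e. lra. }
  assert (Hxp : P (x + e)).
  { apply Hd0. unfold ball; simpl. unfold AbsRing_ball, minus, plus, opp, abs; simpl.
    rewrite Rabs_right; lra. }
  assert (Hxm : P (x - e)).
  { apply Hd0. unfold ball; simpl. unfold AbsRing_ball, minus, plus, opp, abs; simpl.
    rewrite Rabs_left; lra. }
  pose proof (Hincr x (x + e) Hx ltac:(lra)). pose proof (Hincr (x - e) x Hxm ltac:(lra)).
  exists (Rmin (U (x + e) - U x) (U x - U (x - e))).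
  split; [apply Rmin_glb_lt; lra|].
  intros t Ht HUt.
  pose proof (Rmin_l (U (x + e) - U x) (U x - U (x - e))).
  pose proof (Rmin_r (U (x + e) - U x) (U x - U (x - e))).
  apply Rabs_def2 in HUt. apply Rabs_def1.
  - destruct (Rlt_dec (t - x) eta); [assumption|].
    pose proof (Hincr (x + e) t Hxp ltac:(lra)). lra.
  - destruct (Rlt_dec (- eta) (t - x)); [assumption|].
    pose proof (Hincr t (x - e) Ht ltac:(lra)). lra.
Qed.

Lemma ratio_of_increments_limit F V x dF dV : dV <> 0 ->
  derivable_pt_lim F x dF -> derivable_pt_lim V x dV ->
  forall e, 0 < e -> exists eta, 0 < eta /\ forall t, Rabs (t - x) < eta -> V t <> V x ->
    Rabs ((F t - F x) / (V t - V x) - dF / dV) < e.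
Proof.
  intros HdV HF HV e He.
  set (c := dF / dV).
  assert (HH : derivable_pt_lim (fun t => F t - c * V t) x 0).
  { replace 0 with (dF - c * dV) by (unfold c; field; exact HdV).
    apply (derivable_pt_lim_minus F (fun t => c * V t)), derivable_pt_lim_scal, HV.
    exact HF. }
  assert (Habs : 0 < Rabs dV) by (apply Rabs_pos_lt, HdV).
  destruct (HH (e * Rabs dV / 2) ltac:(nra)) as [d1 Hd1].
  destruct (HV (Rabs dV / 2) ltac:(lra)) as [d2 Hd2].
  exists (Rmin d1 d2). split; [apply Rmin_glb_lt; apply cond_pos|].
  intros t Ht HVt.
  assert (Htx : t - x <> 0) by (intro H0; replace t with x in HVt by lra; auto).
  specialize (Hd1 (t - x) Htx (Rlt_le_trans _ _ _ Ht (Rmin_l _ _))).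
  specialize (Hd2 (t - x) Htx (Rlt_le_trans _ _ _ Ht (Rmin_r _ _))).
  replace (x + (t - x)) with t in Hd1, Hd2 by ring.
  set (A := (F t - c * V t - (F x - c * V x)) / (t - x)) in Hd1.
  set (B := (V t - V x) / (t - x)) in Hd2.
  assert (HB : Rabs dV / 2 < Rabs B).
  { pose proof (Rabs_triang_inv dV B). rewrite Rabs_minus_sym in Hd2. lra. }
  assert (HB0 : B <> 0) by (intro HB0; rewrite HB0, Rabs_R0 in HB; lra).
  assert (HVt' : V t - V x <> 0) by lra.
  replace ((F t - F x) / (V t - V x) - c) with (A / B) by (unfold A, B; field; auto).
  rewrite Rabs_div by exact HB0. rewrite Rminus_0_r in Hd1.
  apply Rlt_div_l; [lra|]. nra.
Qed.

Lemma sqrt_sq_sub_1_pos x : 1 < x -> 0 < sqrt (x ^ 2 - 1).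
Proof. intros Hx. apply sqrt_lt_R0. nra. Qed.

Lemma sqrt_sq_sub_1_sq x : 1 < x -> sqrt (x ^ 2 - 1) * sqrt (x ^ 2 - 1) = x ^ 2 - 1.
Proof. intros Hx. apply sqrt_sqrt. nra. Qed.

Lemma exp_arcosh x : 1 < x -> exp (arcosh x) = x + sqrt (x ^ 2 - 1).
Proof.
  intros Hx. apply exp_ln. pose proof (sqrt_sq_sub_1_pos x Hx). lra.
Qed.

Lemma cosh_arcosh x : 1 < x -> cosh (arcosh x) = x.
Proof.
  intros Hx. pose proof (sqrt_sq_sub_1_pos x Hx). pose proof (sqrt_sq_sub_1_sq x Hx).
  unfold cosh. rewrite exp_Ropp, exp_arcosh by exact Hx. field_simplify_eq; nra.
Qed.

Lemma sinh_arcosh x : 1 < x -> sinh (arcosh x) = sqrt (x ^ 2 - 1).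
Proof.
  intros Hx. pose proof (sqrt_sq_sub_1_pos x Hx). pose proof (sqrt_sq_sub_1_sq x Hx).
  unfold sinh. rewrite exp_Ropp, exp_arcosh by exact Hx. field_simplify_eq; nra.
Qed.

Lemma derivable_pt_lim_arcosh x : 1 < x -> derivable_pt_lim arcosh x (/ sqrt (x ^ 2 - 1)).
Proof.
  intros Hx. pose proof (sqrt_sq_sub_1_pos x Hx). pose proof (sqrt_sq_sub_1_sq x Hx).
  apply is_derive_Reals. unfold arcosh.
  auto_derive; replace (x * (x * 1) + - (1)) with (x ^ 2 - 1) by ring.
  - repeat split; nra.
  - field. lra.
Qed.

Lemma derivable_pt_lim_cosh_arcosh A t da : derivable_pt_lim A t da -> 1 < A t ->
  derivable_pt_lim (fun x => cosh (arcosh (A x))) t da.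
Proof.
  intros HA Ht.
  replace da with (sinh (arcosh (A t)) * (/ sqrt (A t ^ 2 - 1) * da)).
  - apply (derivable_pt_lim_comp (fun x => arcosh (A x)) cosh).
    + apply (derivable_pt_lim_comp A arcosh); [exact HA | exact (derivable_pt_lim_arcosh _ Ht)].
    + apply derivable_pt_lim_cosh.
  - rewrite sinh_arcosh by exact Ht. pose proof (sqrt_sq_sub_1_pos _ Ht). field. lra.
Qed.

Lemma derivable_pt_lim_sinh_arcosh A t da : derivable_pt_lim A t da -> 1 < A t ->
  derivable_pt_lim (fun x => sinh (arcosh (A x))) t (A t * da / sqrt (A t ^ 2 - 1)).
Proof.
  intros HA Ht.
  replace (A t * da / sqrt (A t ^ 2 - 1)) with (cosh (arcosh (A t)) * (/ sqrt (A t ^ 2 - 1) * da)).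
  - apply (derivable_pt_lim_comp (fun x => arcosh (A x)) sinh).
    + apply (derivable_pt_lim_comp A arcosh); [exact HA | exact (derivable_pt_lim_arcosh _ Ht)].
    + apply derivable_pt_lim_sinh.
  - rewrite cosh_arcosh by exact Ht. pose proof (sqrt_sq_sub_1_pos _ Ht). field. lra.
Qed.

Definition angle_fn (eps : Z) (w : R) : R := if Z.eqb eps 1 then acos w else arcosh w.

Definition angle_domain (eps : Z) (w : R) : Prop := if Z.eqb eps 1 then -1 < w < 1 else 1 < w.

Lemma derivable_pt_lim_angle_fn eps w : (eps = 1%Z \/ eps = (-1)%Z) -> angle_domain eps w ->
  derivable_pt_lim (angle_fn eps) w (- IZR eps / sqrt (IZR eps * (1 - w ^ 2))).
Proof.
  unfold angle_domain, angle_fn. intros [-> | ->] Hw; cbv [Z.eqb Pos.eqb] in Hw |- *.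
  - replace (- IZR 1 / sqrt (IZR 1 * (1 - w ^ 2))) with (-1 / sqrt (1 - w²))
      by (unfold Rsqr; do 2 f_equal; ring).
    exact (derive_pt_eq_1 _ _ _ (derivable_pt_acos w Hw) (derive_pt_acos w Hw)).
  - replace (- IZR (-1) / sqrt (IZR (-1) * (1 - w ^ 2))) with (/ sqrt (w ^ 2 - 1))
      by (replace (IZR (-1) * (1 - w ^ 2)) with (w ^ 2 - 1) by ring; field;
          apply Rgt_not_eq, sqrt_sq_sub_1_pos, Hw).
    exact (derivable_pt_lim_arcosh w Hw).
Qed.

Lemma gen_angle_angle_fn eps l i : (eps = 1%Z \/ eps = (-1)%Z) ->
  gen_angle eps l i =
  angle_fn eps ((cosh (l (nxt i)) * cosh (l (nxt (nxt i))) - IZR eps * cosh (l i))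
                / (sinh (l (nxt i)) * sinh (l (nxt (nxt i))))).
Proof.
  intros [-> | ->]; unfold gen_angle, angle_fn; cbv [Z.eqb Pos.eqb]; do 2 f_equal; ring.
Qed.

Definition angle_delta (eps : Z) (a b c : R) : R :=
  IZR eps * (1 - a ^ 2 - b ^ 2 - c ^ 2) + 2 * a * b * c.

Definition angle_deriv (eps : Z) (a b c da db dc : R) : R :=
  (da - (a * b - IZR eps * c) / (b ^ 2 - 1) * db - (a * c - IZR eps * b) / (c ^ 2 - 1) * dc)
  / sqrt (angle_delta eps a b c).

Lemma cosine_ratio_defect eps a b c : (eps = 1%Z \/ eps = (-1)%Z) -> 1 < b -> 1 < c ->
  IZR eps * (1 - ((b * c - IZR eps * a) / (sqrt (b ^ 2 - 1) * sqrt (c ^ 2 - 1))) ^ 2)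
  = angle_delta eps a b c / (sqrt (b ^ 2 - 1) * sqrt (c ^ 2 - 1)) ^ 2.
Proof.
  intros Heps Hb Hc.
  pose proof (sqrt_sq_sub_1_pos b Hb). pose proof (sqrt_sq_sub_1_pos c Hc).
  assert (HP : (sqrt (b ^ 2 - 1) * sqrt (c ^ 2 - 1)) ^ 2 = (b ^ 2 - 1) * (c ^ 2 - 1)).
  { replace ((sqrt (b ^ 2 - 1) * sqrt (c ^ 2 - 1)) ^ 2) with
      ((sqrt (b ^ 2 - 1) * sqrt (b ^ 2 - 1)) * (sqrt (c ^ 2 - 1) * sqrt (c ^ 2 - 1))) by ring.
    rewrite (sqrt_sq_sub_1_sq b Hb), (sqrt_sq_sub_1_sq c Hc). reflexivity. }
  replace (((b * c - IZR eps * a) / (sqrt (b ^ 2 - 1) * sqrt (c ^ 2 - 1))) ^ 2)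
    with ((b * c - IZR eps * a) ^ 2 / (sqrt (b ^ 2 - 1) * sqrt (c ^ 2 - 1)) ^ 2)
    by (field; split; lra).
  rewrite HP. unfold angle_delta.
  destruct Heps as [-> | ->]; field; split; nra.
Qed.

Lemma cosine_ratio_domain eps a b c : (eps = 1%Z \/ eps = (-1)%Z) ->
  1 < a -> 1 < b -> 1 < c -> 0 < angle_delta eps a b c ->
  angle_domain eps ((b * c - IZR eps * a) / (sqrt (b ^ 2 - 1) * sqrt (c ^ 2 - 1))).
Proof.
  intros Heps Ha Hb Hc HD.
  pose proof (sqrt_sq_sub_1_pos b Hb). pose proof (sqrt_sq_sub_1_pos c Hc).
  assert (Hdef : 0 < IZR eps * (1 - ((b * c - IZR eps * a)
                   / (sqrt (b ^ 2 - 1) * sqrt (c ^ 2 - 1))) ^ 2)).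
  { rewrite cosine_ratio_defect by assumption.
    apply Rdiv_lt_0_compat; [exact HD | apply pow_lt; nra]. }
  revert Hdef. unfold angle_domain.
  destruct Heps as [-> | ->]; cbv [Z.eqb Pos.eqb];
    set (w := (b * c - _ * a) / _); intros Hdef.
  - split; nra.
  - assert (0 < w) by (apply Rdiv_lt_0_compat; nra). nra.
Qed.

Lemma derivable_pt_lim_angle eps A B C t da db dc : (eps = 1%Z \/ eps = (-1)%Z) ->
  derivable_pt_lim A t da -> derivable_pt_lim B t db -> derivable_pt_lim C t dc ->
  1 < A t -> 1 < B t -> 1 < C t -> 0 < angle_delta eps (A t) (B t) (C t) ->
  derivable_pt_lim
    (fun x => angle_fn eps
       ((cosh (arcosh (B x)) * cosh (arcosh (C x)) - IZR eps * cosh (arcosh (A x)))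
        / (sinh (arcosh (B x)) * sinh (arcosh (C x)))))
    t (angle_deriv eps (A t) (B t) (C t) da db dc).
Proof.
  intros Heps HA HB HC Ha Hb Hc HD.
  pose proof (sqrt_sq_sub_1_pos _ Hb) as Sb. pose proof (sqrt_sq_sub_1_pos _ Hc) as Sc.
  pose proof (sqrt_sq_sub_1_sq _ Hb) as Sb2. pose proof (sqrt_sq_sub_1_sq _ Hc) as Sc2.
  assert (HQ : 0 < sqrt (angle_delta eps (A t) (B t) (C t))) by (apply sqrt_lt_R0; exact HD).
  eapply derivable_pt_lim_eq_value.
  - apply derivable_pt_lim_comp_fun.
    + apply derivable_pt_lim_div_fun.
      * apply derivable_pt_lim_minus_fun.
        -- apply derivable_pt_lim_mult_fun; apply derivable_pt_lim_cosh_arcosh; eassumption.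
        -- apply (derivable_pt_lim_mult_fun (fun _ => IZR eps)).
           ++ apply derivable_pt_lim_const.
           ++ apply derivable_pt_lim_cosh_arcosh; eassumption.
      * apply derivable_pt_lim_mult_fun; apply derivable_pt_lim_sinh_arcosh; eassumption.
      * rewrite !sinh_arcosh by assumption. nra.
    + rewrite !cosh_arcosh, !sinh_arcosh by assumption.
      apply derivable_pt_lim_angle_fn; [exact Heps|].
      apply cosine_ratio_domain; assumption.
  - cbv beta. rewrite !cosh_arcosh, !sinh_arcosh by assumption.
    rewrite cosine_ratio_defect by assumption.
    rewrite sqrt_div_alt, sqrt_pow2 by (try apply pow_lt; nra).
    unfold angle_deriv, Rsqr.
    set (Q := sqrt (angle_delta _ _ _ _)) in *.
    set (b := B t) in *. set (c := C t) in *.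
    set (sb := sqrt (b ^ 2 - 1)) in *. set (sc := sqrt (c ^ 2 - 1)) in *.
    set (a := A t) in *. clearbody Q sb sc.
    (* sb and sc enter the derivative only through their squares *)
    transitivity (- IZR eps * (db * c + b * dc - IZR eps * da
                  - (b * db / (sb * sb) + c * dc / (sc * sc)) * (b * c - IZR eps * a)) / Q).
    + field. repeat split; lra.
    + rewrite Sb2, Sc2. destruct Heps as [-> | ->]; field; repeat split; nra.
Qed.

Lemma cosh_add_sub_cosh p q : cosh (p + q) - cosh (p - q) = 2 * sinh p * sinh q.
Proof.
  unfold cosh, sinh, Rminus.
  rewrite !Ropp_plus_distr, !exp_plus, !Ropp_involutive. field.
Qed.

Lemma cosh_lt_of_abs_lt x y : Rabs x < y -> cosh x < cosh y.
Proof.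
  intros Hxy. apply Rabs_def2 in Hxy.
  assert (Hsinh : forall z, 0 < z -> 0 < sinh z)
    by (intros z Hz; rewrite <- sinh_0; apply sinh_lt, Hz).
  pose proof (cosh_add_sub_cosh ((y + x) / 2) ((y - x) / 2)) as H.
  replace ((y + x) / 2 + (y - x) / 2) with y in H by field.
  replace ((y + x) / 2 - (y - x) / 2) with x in H by field.
  pose proof (Hsinh ((y + x) / 2) ltac:(lra)). pose proof (Hsinh ((y - x) / 2) ltac:(lra)).
  nra.
Qed.

Lemma angle_delta_cosh a b c :
  angle_delta 1 (cosh a) (cosh b) (cosh c) = (cosh a - cosh (b - c)) * (cosh (b + c) - cosh a).
Proof.
  unfold angle_delta, cosh. unfold Rminus.
  rewrite !Ropp_plus_distr, !exp_plus, !Ropp_involutive, !exp_Ropp.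
  pose proof (exp_pos a). pose proof (exp_pos b). pose proof (exp_pos c).
  field. lra.
Qed.

Lemma angle_delta_triangle_pos a b c : 0 < a -> 0 < b -> 0 < c ->
  a < b + c -> b < c + a -> c < a + b -> 0 < angle_delta 1 (cosh a) (cosh b) (cosh c).
Proof.
  intros Ha Hb Hc Hab Hbc Hca. rewrite angle_delta_cosh.
  apply Rmult_lt_0_compat; apply Rlt_0_minus, cosh_lt_of_abs_lt.
  - apply Rabs_def1; lra.
  - rewrite Rabs_right; lra.
Qed.

Lemma angle_delta_hexagon_pos a b c : 1 < a -> 1 < b -> 1 < c -> 0 < angle_delta (-1) a b c.
Proof.
  intros Ha Hb Hc. unfold angle_delta.
  assert (0 < a * b) by nra. assert (0 < a * b * c) by nra. nra.
Qed.

Definition angle_deriv_sym (eps : Z) (ci cj ck yi yj yk : R) : R :=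
  (IZR eps * ck * (yi * ci + yj * cj) - yi * cj - yj * ci + IZR eps * yk * (1 - ck ^ 2))
  / ((ck ^ 2 - 1) * sqrt (angle_delta eps ci cj ck)).

Lemma angle_deriv_sym_comm eps ci cj ck yi yj yk :
  angle_deriv_sym eps ci cj ck yi yj yk = angle_deriv_sym eps cj ci ck yj yi yk.
Proof.
  unfold angle_deriv_sym.
  replace (angle_delta eps cj ci ck) with (angle_delta eps ci cj ck)
    by (unfold angle_delta; ring).
  unfold Rdiv. f_equal. ring.
Qed.

Lemma angle_deriv_swap eps a b c da db dc :
  angle_deriv eps a b c da db dc = angle_deriv eps a c b da dc db.
Proof.
  unfold angle_deriv.
  replace (angle_delta eps a c b) with (angle_delta eps a b c) by (unfold angle_delta; ring).
  unfold Rdiv. f_equal. ring.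
Qed.

Lemma angle_deriv_scaled eps ci cj ck yi yj yk x : (eps = 1%Z \/ eps = (-1)%Z) ->
  x <> 0 -> 1 < cj -> 1 < ck -> 0 < angle_delta eps ci cj ck ->
  angle_deriv eps ci cj ck ((yj * ci - IZR eps * yk) / x) 0 ((yj * ck - IZR eps * yi) / x) * x
  = angle_deriv_sym eps ci cj ck yi yj yk.
Proof.
  intros Heps Hx Hj Hk HD.
  assert (0 < sqrt (angle_delta eps ci cj ck)) by (apply sqrt_lt_R0; exact HD).
  unfold angle_deriv, angle_deriv_sym.
  destruct Heps as [-> | ->]; field; repeat split; nra.
Qed.

Lemma is_derive_tau s t : is_derive (tau s) t (tau (- s) t).
Proof.
  unfold tau. auto_derive; [exact I|]. rewrite opp_IZR. ring.
Qed.

Lemma Derive_tau s t : Derive (fun x => tau s x) t = tau (- s) t.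
Proof. apply is_derive_unique, is_derive_tau. Qed.

Lemma ex_derive_tau s t : ex_derive (fun x => tau s x) t.
Proof. eexists. apply is_derive_tau. Qed.

Lemma tau_sq_diff s t : tau (- s) t ^ 2 - tau s t ^ 2 = IZR s.
Proof.
  unfold tau. rewrite opp_IZR, exp_Ropp. pose proof (exp_pos t). field. lra.
Qed.

Lemma tau_0_pos t : 0 < tau 0 t.
Proof. unfold tau. pose proof (exp_pos t). lra. Qed.

Lemma derivable_pt_lim_cosh_third_l eps delta phi a b :
  (delta = (-1)%Z \/ delta = 0%Z \/ delta = 1%Z) -> tau (eps * delta) a <> 0 ->
  derivable_pt_lim (fun t => cosh_third eps delta t b phi) a
    ((tau (- (eps * delta)) a * cosh_third eps delta a b phi
      - IZR eps * tau (- (eps * delta)) b) / tau (eps * delta) a).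
Proof.
  intros Hdelta Ha. apply is_derive_Reals.
  pose proof (tau_sq_diff (eps * delta) a) as Hsq. rewrite mult_IZR in Hsq.
  destruct Hdelta as [-> | [-> | ->]]; unfold cosh_third; cbv [Z.eqb Pos.eqb] in *.
  - auto_derive; rewrite ?Derive_tau, ?Z.opp_involutive; auto using ex_derive_tau.
    replace (IZR eps) with (tau (eps * -1) a ^ 2 - tau (- (eps * -1)) a ^ 2) by lra.
    field. exact Ha.
  - rewrite Z.mul_0_r. cbv [Z.opp].
    pose proof (tau_0_pos a). pose proof (tau_0_pos b).
    auto_derive; rewrite ?Derive_tau; cbv [Z.opp].
    + repeat split; auto using ex_derive_tau. apply Rgt_not_eq. nra.
    + field. lra.
  - auto_derive; rewrite ?Derive_tau, ?Z.opp_involutive; auto using ex_derive_tau.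
    replace (IZR eps) with (tau (- (eps * 1)) a ^ 2 - tau (eps * 1) a ^ 2) by lra.
    field. exact Ha.
Qed.

Lemma cosh_third_comm eps delta a b phi :
  cosh_third eps delta a b phi = cosh_third eps delta b a phi.
Proof.
  unfold cosh_third.
  destruct (Z.eqb delta 1); [ring|]. destruct (Z.eqb delta (-1)); [ring|].
  cbv zeta. replace (2 * tau 0 b * tau 0 a) with (2 * tau 0 a * tau 0 b) by ring.
  unfold Rdiv. ring.
Qed.

Lemma derivable_pt_lim_cosh_third_r eps delta phi a b :
  (delta = (-1)%Z \/ delta = 0%Z \/ delta = 1%Z) -> tau (eps * delta) b <> 0 ->
  derivable_pt_lim (fun t => cosh_third eps delta a t phi) b
    ((tau (- (eps * delta)) b * cosh_third eps delta a b phi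
      - IZR eps * tau (- (eps * delta)) a) / tau (eps * delta) b).
Proof.
  intros Hdelta Hb.
  replace (fun t => cosh_third eps delta a t phi) with (fun t => cosh_third eps delta t a phi)
    by (apply functional_extensionality; intros; apply cosh_third_comm).
  rewrite cosh_third_comm. exact (derivable_pt_lim_cosh_third_l _ _ _ _ _ Hdelta Hb).
Qed.

Definition cosh_side (eps delta : Z) (phi r : idx -> R) (m : idx) : R :=
  cosh_third eps delta (r (nxt m)) (r (nxt (nxt m))) (phi m).

Definition third (a b : idx) : idx :=
  match a, b with
  | i1, i2 | i2, i1 => i3
  | i1, i3 | i3, i1 => i2
  | _, _ => i1
  end.

Definition cosh_side_deriv (eps delta : Z) (phi r : idx -> R) (m j : idx) : R :=
  if idx_eqb m j then 0 else
  (tau (- (eps * delta)) (r j) * cosh_side eps delta phi r m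
   - IZR eps * tau (- (eps * delta)) (r (third m j))) / tau (eps * delta) (r j).

Lemma derivable_pt_lim_cosh_side eps delta phi r m j :
  (delta = (-1)%Z \/ delta = 0%Z \/ delta = 1%Z) -> tau (eps * delta) (r j) <> 0 ->
  derivable_pt_lim (fun t => cosh_side eps delta phi (upd r j t) m) (r j)
    (cosh_side_deriv eps delta phi r m j).
Proof.
  intros Hdelta Hj. unfold cosh_side_deriv, cosh_side.
  destruct m, j; cbv [upd idx_eqb nxt third];
    first [ apply derivable_pt_lim_const
          | apply derivable_pt_lim_cosh_third_l; assumption
          | apply derivable_pt_lim_cosh_third_r; assumption ].
Qed.

Lemma upd_same (r : idx -> R) j : upd r j (r j) = r.
Proof.
  apply functional_extensionality. intros m. unfold upd. destruct m, j; reflexivity.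
Qed.

Definition theta_deriv_r (eps delta : Z) (phi r : idx -> R) (i j : idx) : R :=
  let C := cosh_side eps delta phi r in
  let dC m := cosh_side_deriv eps delta phi r m j in
  angle_deriv eps (C i) (C (nxt i)) (C (nxt (nxt i))) (dC i) (dC (nxt i)) (dC (nxt (nxt i))).

Lemma derivable_pt_lim_theta eps delta phi r i j :
  (eps = 1%Z \/ eps = (-1)%Z) -> (delta = (-1)%Z \/ delta = 0%Z \/ delta = 1%Z) ->
  tau (eps * delta) (r j) <> 0 -> (forall m, 1 < cosh_side eps delta phi r m) ->
  0 < angle_delta eps (cosh_side eps delta phi r i) (cosh_side eps delta phi r (nxt i))
        (cosh_side eps delta phi r (nxt (nxt i))) ->
  derivable_pt_lim (fun t => theta eps delta phi (upd r j t) i) (r j)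
    (theta_deriv_r eps delta phi r i j).
Proof.
  intros Heps Hdelta Hj HC HD.
  replace (fun t => theta eps delta phi (upd r j t) i) with
    (fun t => angle_fn eps
       ((cosh (arcosh (cosh_side eps delta phi (upd r j t) (nxt i)))
         * cosh (arcosh (cosh_side eps delta phi (upd r j t) (nxt (nxt i))))
         - IZR eps * cosh (arcosh (cosh_side eps delta phi (upd r j t) i)))
        / (sinh (arcosh (cosh_side eps delta phi (upd r j t) (nxt i)))
           * sinh (arcosh (cosh_side eps delta phi (upd r j t) (nxt (nxt i)))))))
    by (apply functional_extensionality; intros t; symmetry;
        exact (gen_angle_angle_fn eps _ i Heps)).
  eapply derivable_pt_lim_eq_value.
  - apply (derivable_pt_lim_angle eps (fun t => cosh_side eps delta phi (upd r j t) i)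
             (fun t => cosh_side eps delta phi (upd r j t) (nxt i))
             (fun t => cosh_side eps delta phi (upd r j t) (nxt (nxt i))));
      try apply derivable_pt_lim_cosh_side; try assumption; rewrite upd_same; auto.
  - rewrite upd_same. reflexivity.
Qed.

Lemma theta_deriv_r_sym eps delta phi r i j : (eps = 1%Z \/ eps = (-1)%Z) ->
  (forall m, tau (eps * delta) (r m) <> 0) -> (forall m, 1 < cosh_side eps delta phi r m) ->
  0 < angle_delta eps (cosh_side eps delta phi r i1) (cosh_side eps delta phi r i2)
        (cosh_side eps delta phi r i3) ->
  theta_deriv_r eps delta phi r i j * tau (eps * delta) (r j)
  = theta_deriv_r eps delta phi r j i * tau (eps * delta) (r i).
Proof.
  intros Heps Htau HC HD.
  pose proof (HC i1). pose proof (HC i2). pose proof (HC i3).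
  destruct i, j; try reflexivity; unfold theta_deriv_r, cosh_side_deriv;
    cbv [idx_eqb nxt third];
    rewrite ?(angle_deriv_swap _ _ _ _ _ _ 0);
    rewrite !angle_deriv_scaled by (auto; unfold angle_delta in *; lra);
    apply angle_deriv_sym_comm.
Qed.

Section InverseTauIntegral.

Variable s : Z.
Hypothesis Hs : s = (-1)%Z \/ s = 0%Z \/ s = 1%Z.

Let f := fun u => / tau s u.

Lemma In_J_up a z : In_J s a -> a <= z -> In_J s z.
Proof. unfold In_J. destruct (Z.eqb s 0); auto. lra. Qed.

Lemma In_J_locally x : In_J s x -> locally x (In_J s).
Proof.
  unfold In_J. destruct (Z.eqb s 0); intros Hx.
  - exists (mkposreal 1 Rlt_0_1). intros. exact I.
  - exists (mkposreal x Hx). intros y Hy. apply Rabs_def2 in Hy.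
    unfold minus, plus, opp in Hy; simpl in Hy. lra.
Qed.

Lemma tau_pos t : In_J s t -> 0 < tau s t.
Proof.
  unfold In_J, tau. pose proof (exp_pos t). pose proof (exp_pos (- t)).
  destruct Hs as [-> | [-> | ->]]; cbv [Z.eqb Pos.eqb]; intros Ht; try lra.
  assert (exp (- t) < exp t) by (apply exp_increasing; lra). lra.
Qed.

Lemma continuous_inv_tau t : In_J s t -> continuous f t.
Proof.
  intros Ht. pose proof (tau_pos t Ht).
  apply (@ex_derive_continuous R_AbsRing R_NormedModule).
  unfold f, tau in *. auto_derive. lra.
Qed.

Lemma ex_RInt_inv_tau a b : In_J s a -> In_J s b -> ex_RInt f a b.
Proof.
  intros Ha Hb. apply (@ex_RInt_continuous R_CompleteNormedModule).
  intros z Hz. apply continuous_inv_tau.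
  unfold Rmin in Hz.
  destruct (Rle_dec a b); [apply (In_J_up a) | apply (In_J_up b)]; (assumption || lra).
Qed.

Variable U : R -> R.
Hypothesis HU : forall r, In_J s r -> improper_integral f r (- U r).

Lemma U_sub_RInt x t : In_J s x -> In_J s t -> U t - U x = RInt f x t.
Proof.
  intros Hx Ht. destruct (HU t Ht) as [It Lt]. destruct (HU x Hx) as [Ix Lx].
  apply cond_eq. intros e He.
  destruct (Lt (e / 2) ltac:(lra)) as [Bt HBt].
  destruct (Lx (e / 2) ltac:(lra)) as [Bx HBx].
  set (b := Rmax (Rmax t x) (Rmax Bt Bx)).
  assert (Hb : Rmax t x <= b /\ Rmax Bt Bx <= b) by (split; [apply Rmax_l | apply Rmax_r]).
  pose proof (Rmax_l t x). pose proof (Rmax_r t x).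
  pose proof (Rmax_l Bt Bx). pose proof (Rmax_r Bt Bx).
  destruct (It b ltac:(lra)) as [prt]. destruct (Ix b ltac:(lra)) as [prx].
  specialize (HBt b prt ltac:(lra) ltac:(lra)). specialize (HBx b prx ltac:(lra) ltac:(lra)).
  rewrite <- RInt_Reals in HBt, HBx.
  assert (Hbt : In_J s b) by (apply (In_J_up t); [exact Ht | lra]).
  assert (Hchasles : RInt f x t + RInt f t b = RInt f x b)
    by (apply (RInt_Chasles f); apply ex_RInt_inv_tau; assumption).
  apply Rabs_def2 in HBt. apply Rabs_def2 in HBx. apply Rabs_def1; lra.
Qed.

Lemma U_increasing a b : In_J s a -> a < b -> U a < U b.
Proof.
  intros Ha Hab. assert (Hb : In_J s b) by (apply (In_J_up a); [exact Ha | lra]).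
  apply Rlt_0_minus. rewrite U_sub_RInt by assumption.
  apply RInt_gt_0; [exact Hab | |].
  - intros z Hz. apply Rinv_0_lt_compat, tau_pos, (In_J_up a); [exact Ha | lra].
  - intros z Hz. apply continuous_inv_tau, (In_J_up a); [exact Ha | lra].
Qed.

Lemma derivable_pt_lim_U x : In_J s x -> derivable_pt_lim U x (/ tau s x).
Proof.
  intros Hx. apply is_derive_Reals.
  apply (is_derive_ext_loc (fun t => U x + RInt f x t)).
  - apply (filter_imp (In_J s)); [| exact (In_J_locally x Hx)].
    intros t Ht. rewrite <- U_sub_RInt by assumption. lra.
  - replace (/ tau s x) with (0 + f x) by (unfold f; ring).
    apply (is_derive_plus (fun _ => U x) (fun t => RInt f x t)).
    + apply (@is_derive_const R_AbsRing R_NormedModule).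
    + apply (is_derive_RInt f _ x).
      * apply (filter_imp (In_J s)); [| exact (In_J_locally x Hx)].
        intros t Ht. apply (@RInt_correct R_CompleteNormedModule), ex_RInt_inv_tau; assumption.
      * apply continuous_inv_tau, Hx.
Qed.

Lemma increment_ratio_U F x dF : In_J s x -> derivable_pt_lim F x dF ->
  forall e, 0 < e -> exists d, 0 < d /\ forall t, In_J s t -> 0 < Rabs (U t - U x) < d ->
    Rabs ((F t - F x) / (U t - U x) - dF * tau s x) < e.
Proof.
  intros Hx HF e He. pose proof (tau_pos x Hx) as Htau.
  destruct (ratio_of_increments_limit F U x dF (/ tau s x)
              (Rinv_neq_0_compat _ (Rgt_not_eq _ _ Htau)) HF (derivable_pt_lim_U x Hx) e He)
    as [eta [Heta Hratio]].
  destruct (strictly_increasing_inv_continuous U (In_J s) x Hx (In_J_locally x Hx)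
              U_increasing eta Heta) as [d [Hd Hclose]].
  exists d. split; [exact Hd|]. intros t Ht [HUt0 HUt].
  replace (dF * tau s x) with (dF / / tau s x) by (field; lra).
  apply Hratio; [apply Hclose; assumption|].
  intros Heq. rewrite Heq, Rminus_diag, Rabs_R0 in HUt0. lra.
Qed.

End InverseTauIntegral.

Lemma sign_mul_cases eps delta :
  (eps = 1%Z \/ eps = (-1)%Z) -> (delta = (-1)%Z \/ delta = 0%Z \/ delta = 1%Z) ->
  (eps * delta = -1 \/ eps * delta = 0 \/ eps * delta = 1)%Z.
Proof. intros [-> | ->] [-> | [-> | ->]]; auto. Qed.

Lemma upd_eq (r : idx -> R) j t : upd r j t j = t.
Proof. destruct j; reflexivity. Qed.

Lemma angle_delta_cosh_side_pos eps delta phi r : (eps = 1%Z \/ eps = (-1)%Z) ->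
  in_M eps delta phi r ->
  0 < angle_delta eps (cosh_side eps delta phi r i1) (cosh_side eps delta phi r i2)
        (cosh_side eps delta phi r i3).
Proof.
  intros [-> | ->] [_ [HC [Hpos Htri]]].
  - specialize (Htri eq_refl).
    pose proof (angle_delta_triangle_pos _ _ _ (Hpos i1) (Hpos i2) (Hpos i3)
                  (Htri i1) (Htri i2) (Htri i3)) as HD.
    unfold l_len in HD. rewrite !cosh_arcosh in HD by apply HC. exact HD.
  - apply angle_delta_hexagon_pos; apply HC.
Qed.

Lemma partial_theta_u_theta_deriv_r eps delta phi U r i j :
  (eps = 1%Z \/ eps = (-1)%Z) -> (delta = (-1)%Z \/ delta = 0%Z \/ delta = 1%Z) ->
  (forall x, In_J (eps * delta) x ->
     improper_integral (fun t => / tau (eps * delta) t) x (- U x)) ->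
  in_M eps delta phi r ->
  partial_theta_u eps delta phi U r i j
    (theta_deriv_r eps delta phi r i j * tau (eps * delta) (r j)).
Proof.
  intros Heps Hdelta HU HM.
  pose proof (sign_mul_cases _ _ Heps Hdelta) as Hs.
  pose proof (angle_delta_cosh_side_pos _ _ _ _ Heps HM) as HD.
  destruct HM as [HJ [HC _]].
  assert (HDi : 0 < angle_delta eps (cosh_side eps delta phi r i)
                  (cosh_side eps delta phi r (nxt i)) (cosh_side eps delta phi r (nxt (nxt i))))
    by (destruct i; unfold angle_delta in *; simpl; lra).
  intros e He.
  destruct (increment_ratio_U (eps * delta) Hs U HU _ (r j) _ (HJ j)
              (derivable_pt_lim_theta eps delta phi r i j Heps Hdelta
                 (Rgt_not_eq _ _ (tau_pos _ Hs _ (HJ j))) HC HDi) e He) as [d [Hd Hratio]].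
  exists d. split; [exact Hd|]. intros t [HJt _] Ht.
  pose proof (Hratio t ltac:(rewrite <- (upd_eq r j t); apply HJt) Ht) as Hq.
  rewrite upd_same in Hq. exact Hq.
Qed.

Lemma theta_deriv_u_sym eps delta phi r i j :
  (eps = 1%Z \/ eps = (-1)%Z) -> (delta = (-1)%Z \/ delta = 0%Z \/ delta = 1%Z) ->
  in_M eps delta phi r ->
  theta_deriv_r eps delta phi r i j * tau (eps * delta) (r j)
  = theta_deriv_r eps delta phi r j i * tau (eps * delta) (r i).
Proof.
  intros Heps Hdelta HM.
  apply theta_deriv_r_sym;
    [exact Heps | | apply HM | exact (angle_delta_cosh_side_pos _ _ _ _ Heps HM)].
  intros m. apply Rgt_not_eq, (tau_pos _ (sign_mul_cases _ _ Heps Hdelta)), HM.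
Qed.

Theorem lemma4p3 :
  forall (eps delta : Z) (phi : idx -> R),
    (eps = 1%Z \/ eps = (-1)%Z) ->
    (delta = (-1)%Z \/ delta = 0%Z \/ delta = 1%Z) ->
    (forall k, In_I delta (phi k)) ->
    forall U : R -> R,
      (forall r, In_J (eps * delta) r ->
         improper_integral (fun t => / tau (eps * delta) t) r (- U r)) ->
      forall r : idx -> R, in_M eps delta phi r ->
        forall i j : idx, exists D,
          partial_theta_u eps delta phi U r i j D /\
          partial_theta_u eps delta phi U r j i D.
Proof.
  intros eps delta phi Heps Hdelta _ U HU r HM i j.
  exists (theta_deriv_r eps delta phi r i j * tau (eps * delta) (r j)). split.
  - exact (partial_theta_u_theta_deriv_r _ _ _ _ _ i j Heps Hdelta HU HM).
  - rewrite (theta_deriv_u_sym _ _ _ _ i j Heps Hdelta HM).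
    exact (partial_theta_u_theta_deriv_r _ _ _ _ _ j i Heps Hdelta HU HM).
Qed.
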